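(* (1) $k=|B|=\ell_R((\mathfrak C:_R\mathfrak m)/\mathfrak C)\ge e-r>0$. (2) $k\le\sum_{i\in B}r_i\le e-1$; moreover, if $\sum_{i\in B}r_i=e-1$ then $s_{i_0-1}=c-e$.
   Context: Let $(R,\mathfrak m)$ be a one-dimensional local Noetherian domain with quotient field $K$, not regular, analytically irreducible (the integral closure $\overline R$ of $R$ in $K$ is a DVR and a finite $R$-module) and residually rational. Let $v$ be the valuation of $\overline R$ normalized so a uniformizer $t$ has value 1, $v(R)=\{v(a):a\in R\setminus\{0\}\}$, $\mathfrak C=(R:_K\overline R)=t^c\overline R$ with $c$ the least element of $v(R)$ with $c+\mathbb N\subseteq v(R)$, $\delta=\ell_R(\overline R/R)$, $r=\ell_R((R:_K\mathfrak m)/R)$, $e$ the least positive element of $v(R)$, $n=c-\delta$. Write $v(R)=\{s_0=0<s_1<\cdots\}$ ($s_n=c$), $R_i=\{a\in R:v(a)\ge s_i\}$, $r_i=\ell_R((R:_KR_i)/(R:_KR_{i-1}))$. Let $i_0\in[1,n]$ with $s_{i_0-1}=\min\{y\in v(R):y\ge c-e\}$, $B=\{i_0,\dots,n\}$. Let $x\in\mathfrak m$ with $v(x)=e$, $k=\ell_R(R/(\mathfrak C+xR))$, and $(\mathfrak C:_R\mathfrak m)=\{a\in R:a\mathfrak m\subseteq\mathfrak C\}$. *)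

From HB Require Import structures.
From mathcomp Require Import all_boot all_order all_algebra.
Set Implicit Arguments.
Unset Strict Implicit.
Unset Printing Implicit Defensive.
Import Order.TTheory GRing.Theory Num.Theory.
Local Open Scope ring_scope.

(* Subsets of a field K are predicates K -> Prop.  R is a subring of K,
   and all modules considered are R-submodules of K (fractional ideals). *)
Section Defs.
Variable K : fieldType.

Definition subsetK (A B : K -> Prop) := forall z, A z -> B z.

Definition is_subring (R : K -> Prop) :=
  [/\ R 0, R 1, (forall a b, R a -> R b -> R (a - b))
    & (forall a b, R a -> R b -> R (a * b))].

Definition is_Rmodule (R M : K -> Prop) :=
  [/\ M 0, (forall y z, M y -> M z -> M (y + z))
    & (forall a z, R a -> M z -> M (a * z))].

Definition is_ideal (R I : K -> Prop) := subsetK I R /\ is_Rmodule R I.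

Definition quotient_field_of (R : K -> Prop) :=
  forall z, exists a b, [/\ R a, R b, b != 0 & z = a / b].

Definition unit_in (R : K -> Prop) (a : K) := R a /\ exists b, R b /\ a * b = 1.

(* the set of non-units of R; when R is local this is the maximal ideal m *)
Definition max_ideal (R : K -> Prop) : K -> Prop := fun a => R a /\ ~ unit_in R a.

Definition is_local (R : K -> Prop) := is_ideal R (max_ideal R).

Definition gen_by (R : K -> Prop) (g : seq K) : K -> Prop :=
  fun z => exists c : nat -> K, (forall i, R (c i)) /\ z = \sum_(i < size g) c i * g`_i.

Definition fg_module (R M : K -> Prop) := exists g, forall z, M z <-> gen_by R g z.

Definition noetherian (R : K -> Prop) := forall I, is_ideal R I -> fg_module R I.

Definition prime_ideal (R P : K -> Prop) :=
  [/\ is_ideal R P, ~ P 1 & forall a b, R a -> R b -> P (a * b) -> P a \/ P b].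

Definition dim_one (R : K -> Prop) :=
  (exists a, max_ideal R a /\ a != 0) /\
  forall P, prime_ideal R P -> (exists a, P a /\ a != 0) ->
    forall z, P z <-> max_ideal R z.

(* regular local ring of dimension one: maximal ideal generated by one element *)
Definition is_regular (R : K -> Prop) :=
  exists y, forall z, max_ideal R z <-> exists a, R a /\ z = a * y.

Definition integral_over (R : K -> Prop) (z : K) :=
  exists (d : nat) (a : nat -> K), (forall i, R (a i)) /\
    z ^+ d + \sum_(i < d) a i * z ^+ i = 0.

Definition Rbar (R : K -> Prop) : K -> Prop := fun z => integral_over R z.

(* v is the discrete valuation of K whose valuation ring is O, normalized so
   that a uniformizer has value 1 (the value at 0 is irrelevant) *)
Definition normalized_valuation_of (O : K -> Prop) (v : K -> int) :=
  [/\ (forall y z, y != 0 -> z != 0 -> v (y * z) = v y + v z),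
      (forall y z, y != 0 -> z != 0 -> y + z != 0 ->
          Order.min (v y) (v z) <= v (y + z)),
      (exists t, t != 0 /\ v t = 1)
    & (forall z, z != 0 -> (O z <-> 0 <= v z))].

(* residually rational: R/m -> Rbar/m_Rbar is onto *)
Definition residually_rational (R : K -> Prop) (v : K -> int) :=
  forall z, Rbar R z -> exists a, R a /\ (z - a = 0 \/ 0 < v (z - a)).

Definition value_set (R : K -> Prop) (v : K -> int) : nat -> Prop :=
  fun y => exists a, [/\ R a, a != 0 & v a = y%:Z].

Definition colon (A B : K -> Prop) : K -> Prop := fun z => forall b, B b -> A (z * b).

Definition colon_in (R A B : K -> Prop) : K -> Prop := fun z => R z /\ colon A B z.

Definition conductor (R : K -> Prop) := colon R (Rbar R).

Definition Rsub (R : K -> Prop) (v : K -> int) (s : nat -> nat) (i : nat) : K -> Prop :=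
  fun a => R a /\ (a = 0 \/ (s i)%:Z <= v a).

Definition plus_mul (C R : K -> Prop) (x : K) : K -> Prop :=
  fun z => exists a b, [/\ C a, R b & z = a + x * b].

Definition strict_chain (R N M : K -> Prop) (n : nat) (f : nat -> K -> Prop) :=
  [/\ (forall z, f 0%N z <-> N z), (forall z, f n z <-> M z),
      (forall i, (i <= n)%N -> is_Rmodule R (f i))
    & (forall i, (i < n)%N -> subsetK (f i) (f i.+1) /\ exists z, f i.+1 z /\ ~ f i z)].

(* length_of R N M n : the R-module M/N has length n (n is the maximal
   length of a strict chain of submodules from N to M) *)
Definition length_of (R N M : K -> Prop) (n : nat) :=
  (exists f, strict_chain R N M n f) /\
  forall m f, strict_chain R N M m f -> (m <= n)%N.

End Defs.

Definition enumerates (S : nat -> Prop) (s : nat -> nat) :=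
  [/\ forall i, S (s i), forall i, (s i < s i.+1)%N & forall y, S y -> exists i, s i = y].

Definition conductor_exp (S : nat -> Prop) (c : nat) :=
  (S c /\ forall m, S (c + m)%N) /\
  forall c', (S c' /\ forall m, S (c' + m)%N) -> (c <= c')%N.

Definition least_pos (S : nat -> Prop) (e : nat) :=
  [/\ (0 < e)%N, S e & forall y, (0 < y)%N -> S y -> (e <= y)%N].

From HB Require Import structures.
From mathcomp Require Import all_boot all_order all_algebra.
From mathcomp Require Import boolp zify ring.
Set Implicit Arguments.
Unset Strict Implicit.
Unset Printing Implicit Defensive.
Import Order.TTheory GRing.Theory Num.Theory.
Local Open Scope ring_scope.

(* Residual rationality lets one raise the value of an element outside a
   submodule by subtracting a multiple of an element of the submodule with the same value.
   Hence, for R-submodules N <= M of K whose values are bounded below and which agree in high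
   values, the length of M/N is the number of values of M that are not values of N.  Every
   length in the theorem thereby becomes a count in the value semigroup S = v(R):
   c - delta = #{y in S | y < c}, k = l((C : m)/C) = #{y in S | c - e <= y < c}, and r counts
   the values of (R : m) outside S.  Those lie in distinct nonzero classes mod e (an Apery-set
   argument), so r <= e - 1, and they include every y in [c - e, c) outside S, so e - r <= k.
   Each r_i is positive because c - 1 is not in S, and concatenating the quotients
   (R : R_{i-1}) / (R : R_i) maps their new values injectively into [1, e), where e - 1 is
   excluded unless s_{i0-1} = c - e. *)

Section Valuation.
Variables (K : fieldType) (O : K -> Prop) (v : K -> int).
Hypothesis vO : normalized_valuation_of O v.

Lemma vM y z : y != 0 -> z != 0 -> v (y * z) = v y + v z.
Proof. by case: vO => H _ _ _; apply: H. Qed.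

Lemma vD y z : y != 0 -> z != 0 -> y + z != 0 -> Order.min (v y) (v z) <= v (y + z).
Proof. by case: vO => _ H _ _; apply: H. Qed.

Lemma v1 : v 1 = 0.
Proof. by have := vM (oner_neq0 K) (oner_neq0 K); rewrite mulr1; move: (v 1); lia. Qed.

Lemma vN z : z != 0 -> v (- z) = v z.
Proof.
move=> nz; have nz1 : (-1 : K) != 0 by rewrite oppr_eq0 oner_neq0.
have vN1 : v (-1) = 0.
  by have := vM nz1 nz1; rewrite mulrNN mulr1 v1; move: (v (-1)); lia.
by rewrite -mulN1r vM // vN1 add0r.
Qed.

Lemma vV z : z != 0 -> v z^-1 = - v z.
Proof.
by move=> nz; have := vM nz (invr_neq0 nz); rewrite mulfV // v1; move: (v z) (v z^-1); lia.
Qed.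

Lemma v_div y z : y != 0 -> z != 0 -> v (y / z) = v y - v z.
Proof. by move=> ny nz; rewrite vM ?invr_neq0 // vV. Qed.

Lemma vX z n : z != 0 -> v (z ^+ n) = n%:Z * v z.
Proof.
move=> nz; elim: n => [|n IH]; first by rewrite expr0 v1 mul0r.
by rewrite exprS vM ?expf_neq0 // IH; lia.
Qed.

Lemma vDl_lt y z : y != 0 -> z != 0 -> v y < v z -> y + z != 0 /\ v (y + z) = v y.
Proof.
move=> ny nz lt_yz.
have nyz : y + z != 0.
  by apply: contraTneq lt_yz => /eqP; rewrite addr_eq0 => /eqP ->; rewrite vN // ltxx.
split=> //.
have nNz : - z != 0 by rewrite oppr_eq0.
have h1 := vD ny nz nyz; have := vD nyz nNz; rewrite addrK vN // => /(_ ny) h2.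
move: lt_yz h1 h2; rewrite !ge_min; by move: (v y) (v z) (v (y + z)); lia.
Qed.

Lemma v_onto (n : int) : exists z, z != 0 /\ v z = n.
Proof.
case: vO => _ _ [t [nt vt]] _.
have vtX m : v (t ^+ m) = m%:Z by rewrite vX // vt mulr1.
case: n => m; first by exists (t ^+ m); rewrite expf_neq0.
exists (t ^- m.+1); rewrite invr_neq0 ?expf_neq0 //.
by rewrite vV ?expf_neq0 // vtX NegzE.
Qed.

Lemma valuation_ringE z : z != 0 -> O z <-> 0 <= v z.
Proof. by case: vO => _ _ _; apply. Qed.

Definition val_ge (h : int) (z : K) := z = 0 \/ h <= v z.

Lemma val_geE h z : z != 0 -> val_ge h z <-> h <= v z.
Proof. by move=> nz; split=> [[/eqP|//]|]; [rewrite (negbTE nz)|right]. Qed.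

Lemma val_ge0 h : val_ge h 0. Proof. by left. Qed.

Lemma val_ge_le a b z : a <= b -> val_ge b z -> val_ge a z.
Proof. by move=> le_ab [->|h]; [left|right; apply: le_trans h]. Qed.

Lemma val_geD h y z : val_ge h y -> val_ge h z -> val_ge h (y + z).
Proof.
case=> [->|hy]; first by rewrite add0r.
case=> [->|hz]; first by rewrite addr0; right.
have [->|nyz] := eqVneq (y + z) 0; first exact: val_ge0.
have [->|ny] := eqVneq y 0; first by rewrite add0r; right.
have [->|nz] := eqVneq z 0; first by rewrite addr0; right.
right; move: hy hz (vD ny nz nyz); rewrite ge_min.
by move: (v y) (v z) (v (y + z)) => a b d; lia.
Qed.

Lemma val_geM a b y z : val_ge a y -> val_ge b z -> val_ge (a + b) (y * z).
Proof.
case=> [->|hy]; first by rewrite mul0r; left.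
case=> [->|hz]; first by rewrite mulr0; left.
have [->|ny] := eqVneq y 0; first by rewrite mul0r; left.
have [->|nz] := eqVneq z 0; first by rewrite mulr0; left.
by right; rewrite vM //; apply: lerD.
Qed.

End Valuation.

Section Subring.
Variables (K : fieldType) (R : K -> Prop).
Hypothesis HR : is_subring R.

Lemma subring0 : R 0. Proof. by case: HR. Qed.
Lemma subring1 : R 1. Proof. by case: HR. Qed.
Lemma subringB a b : R a -> R b -> R (a - b). Proof. by case: HR => _ _ H _; apply: H. Qed.
Lemma subringM a b : R a -> R b -> R (a * b). Proof. by case: HR => _ _ _ H; apply: H. Qed.
Lemma subringN a : R a -> R (- a).
Proof. by move=> Ra; rewrite -sub0r; apply: subringB => //; apply: subring0. Qed.
Lemma subringD a b : R a -> R b -> R (a + b).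
Proof. by move=> Ra Rb; rewrite -(opprK b); apply: subringB => //; apply: subringN. Qed.
Lemma subringX a n : R a -> R (a ^+ n).
Proof.
by move=> Ra; elim: n => [|n IH]; rewrite ?expr0 ?exprS; [apply: subring1 | apply: subringM].
Qed.
Lemma subring_sum n (F : 'I_n -> K) : (forall i, R (F i)) -> R (\sum_(i < n) F i).
Proof.
elim: n F => [|n IH] F RF; first by rewrite big_ord0; apply: subring0.
by rewrite big_ord_recr; apply: subringD => //; apply: IH.
Qed.

Section Module.
Variables (A : K -> Prop).
Hypothesis HA : is_Rmodule R A.
Lemma Rmodule0 : A 0. Proof. by case: HA. Qed.
Lemma RmoduleD y z : A y -> A z -> A (y + z). Proof. by case: HA => _ H _; apply: H. Qed.
Lemma RmoduleM a z : R a -> A z -> A (a * z). Proof. by case: HA => _ _ H; apply: H. Qed.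
Lemma RmoduleN z : A z -> A (- z).
Proof. by move=> Az; rewrite -mulN1r; apply: RmoduleM => //; apply/subringN/subring1. Qed.
Lemma RmoduleB y z : A y -> A z -> A (y - z).
Proof. by move=> Ay Az; apply: RmoduleD => //; apply: RmoduleN. Qed.
End Module.

Lemma subring_Rmodule : is_Rmodule R R.
Proof. by split; [apply: subring0 | apply: subringD | apply: subringM]. Qed.

Lemma Rmodule_meet (A B : K -> Prop) :
  is_Rmodule R A -> is_Rmodule R B -> is_Rmodule R (fun z => A z /\ B z).
Proof.
move=> HA HB; split; first by split; apply: Rmodule0.
- by move=> y z [Ay By] [Az Bz]; split; apply: RmoduleD.
- by move=> a z Ra [Az Bz]; split; apply: RmoduleM.
Qed.

Definition Rmodule_plus (A B : K -> Prop) (z : K) :=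
  exists a b, [/\ A a, B b & z = a + b].

Lemma Rmodule_plusl (A B : K -> Prop) a : is_Rmodule R B -> A a -> Rmodule_plus A B a.
Proof. by move=> HB Aa; exists a, 0; rewrite addr0; split=> //; apply: Rmodule0. Qed.

Lemma Rmodule_plus_Rmodule (A B : K -> Prop) :
  is_Rmodule R A -> is_Rmodule R B -> is_Rmodule R (Rmodule_plus A B).
Proof.
move=> HA HB; split; first exact: Rmodule_plusl (Rmodule0 HA).
- move=> _ _ [a [b [Aa Bb ->]]] [a' [b' [Aa' Bb' ->]]].
  by exists (a + a'), (b + b'); rewrite addrACA; split=> //; apply: RmoduleD.
- move=> r _ Rr [a [b [Aa Bb ->]]].
  by exists (r * a), (r * b); rewrite mulrDr; split=> //; apply: RmoduleM.
Qed.

Lemma colon_Rmodule (A B : K -> Prop) : is_Rmodule R A -> is_Rmodule R (colon A B).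
Proof.
move=> HA; split.
- by move=> b _; rewrite mul0r; apply: Rmodule0.
- by move=> y z Cy Cz b Bb; rewrite mulrDl; apply: RmoduleD; [|apply: Cy|apply: Cz].
- by move=> a z Ra Cz b Bb; rewrite -mulrA; apply: RmoduleM => //; apply: Cz.
Qed.

Lemma colonS (A B B' : K -> Prop) : subsetK B' B -> subsetK (colon A B) (colon A B').
Proof. by move=> sB z Cz b /sB; apply: Cz. Qed.

Lemma Rbar0 : Rbar R 0.
Proof.
exists 1%N, (fun _ => 0); split=> [_|]; first exact: subring0.
by rewrite big1 ?expr1 ?addr0 // => i _; rewrite mul0r.
Qed.

Lemma subring_Rbar z : R z -> Rbar R z.
Proof.
move=> Rz; exists 1%N, (fun _ => - z); split=> [_|]; first exact: subringN.
by rewrite big_ord1 expr1 expr0 mulr1 subrr.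
Qed.

Hypothesis Hqf : quotient_field_of R.
Hypothesis Hfg : fg_module R (Rbar R).

Lemma common_denominator_seq (g : seq K) :
  exists2 b, R b /\ b != 0 & forall i, (i < size g)%N -> R (b * g`_i).
Proof.
elim: g => [|h g [b [Rb nb] Rbg]]; first by exists 1; [split; [apply: subring1|apply: oner_neq0]|].
have [a0 [b0 [Ra0 Rb0 nb0 ->]]] := Hqf h.
exists (b0 * b); first by split; [apply: subringM | rewrite mulf_neq0].
case=> [|i] /= lt_i; first by rewrite mulrAC mulrCA mulfV // mulr1; apply: subringM.
by rewrite -mulrA; apply: subringM => //; apply: Rbg.
Qed.

(* Finite generation of the integral closure gives a conductor element. *)
Lemma common_denominator : exists2 b, R b /\ b != 0 & forall z, Rbar R z -> R (b * z).
Proof.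
have [g Hg] := Hfg; have [b Rb Rbg] := common_denominator_seq g.
exists b => // z /Hg [cc [Rcc ->]]; rewrite mulr_sumr; apply: subring_sum => i.
by rewrite mulrCA; apply: subringM => //; apply: Rbg.
Qed.

End Subring.

Section ValuedSubring.
Variables (K : fieldType) (R : K -> Prop) (v : K -> int).
Hypothesis HR : is_subring R.
Hypothesis Hval : normalized_valuation_of (Rbar R) v.

Lemma RbarP z : Rbar R z <-> val_ge v 0 z.
Proof.
have [->|nz] := eqVneq z 0; first by split=> _; [apply: val_ge0|apply: Rbar0].
by rewrite (val_geE _ _ nz); apply: valuation_ringE.
Qed.

Lemma subring_val_ge0 z : R z -> val_ge v 0 z.
Proof. by move=> Rz; apply/RbarP/subring_Rbar. Qed.

Lemma val_ge_Rmodule h : is_Rmodule R (val_ge v h).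
Proof.
split; [exact: val_ge0 | exact: (val_geD Hval)|].
by move=> a z /subring_val_ge0 ha hz; rewrite -(add0r h); apply: (val_geM Hval).
Qed.

Lemma Rbar_Rmodule : is_Rmodule R (Rbar R).
Proof.
have [H0 HD HM] := val_ge_Rmodule 0; split; first exact: Rbar0.
- by move=> y z /RbarP Hy /RbarP Hz; apply/RbarP; apply: HD.
- by move=> a z Ra /RbarP Hz; apply/RbarP; apply: HM.
Qed.

(* Multiplying an integral equation of a^-1 by a^d expresses a^-1 as a polynomial in a. *)
Lemma unit_of_val0 a : R a -> a != 0 -> v a = 0 -> unit_in R a.
Proof.
move=> Ra na va; split=> //.
have nia : a^-1 != 0 by rewrite invr_neq0.
have : Rbar R a^-1 by apply/(valuation_ringE Hval nia); rewrite (vV Hval) // va.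
case=> [[|d] [al [Ral Heq]]].
  by move: Heq; rewrite big_ord0 expr0 addr0 => /eqP; rewrite oner_eq0.
exists (- \sum_(i < d.+1) al i * a ^+ (d - i)%N); split.
  by apply/(subringN HR)/(subring_sum HR) => i; apply/(subringM HR)/(subringX HR).
have Ea (i : 'I_d.+1) : a ^+ d * a^-1 ^+ i = a ^+ (d - i)%N.
  have le_id : (i <= d)%N by rewrite -ltnS.
  by rewrite -{1}(subnK le_id) exprD -mulrA -exprMn mulfV // expr1n mulr1.
have : a ^+ d * (a^-1 ^+ d.+1 + \sum_(i < d.+1) al i * a^-1 ^+ i) = 0 by rewrite Heq mulr0.
rewrite mulrDr mulr_sumr exprS mulrCA -exprMn mulfV // expr1n mulr1.
under eq_bigr => i _ do rewrite mulrCA Ea.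
by move/eqP; rewrite addr_eq0 => /eqP <-; rewrite mulfV.
Qed.

End ValuedSubring.

Section ValueGaps.
Variables (K : fieldType) (R : K -> Prop) (v : K -> int).
Hypothesis HR : is_subring R.
Hypothesis Hval : normalized_valuation_of (Rbar R) v.
Hypothesis Hres : residually_rational R v.

Definition values (A : K -> Prop) (y : int) := exists a, [/\ A a, a != 0 & v a = y].

Lemma valuesS (A B : K -> Prop) y : subsetK A B -> values A y -> values B y.
Proof. by move=> sAB [a [Aa na va]]; exists a; split=> //; apply: sAB. Qed.

Lemma values_onto (A : K -> Prop) n : (forall z, z != 0 -> v z = n -> A z) -> values A n.
Proof. by move=> HA; have [z [nz vz]] := v_onto Hval n; exists z; split=> //; apply: HA. Qed.

Lemma residual_approx w a : a != 0 -> v a = v w ->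
  exists2 r, R r & val_ge v (v w + 1) (w - r * a).
Proof.
move=> na va; have [->|nw] := eqVneq w 0.
  by exists 0; [exact: subring0 HR | rewrite mul0r subr0; left].
have nq : w / a != 0 by rewrite mulf_neq0 ?invr_neq0.
have Rq : Rbar R (w / a) by apply/(valuation_ringE Hval nq); rewrite (v_div Hval) // va subrr.
have [r [Rr hr]] := Hres Rq; exists r => //.
have -> : w - r * a = a * (w / a - r) by rewrite mulrBr mulrCA mulfV // mulr1 mulrC.
rewrite -va; apply: (val_geM Hval); first by right.
by case: hr => [->|hr]; [left | right; move: hr; move: (v _); lia].
Qed.

Lemma raise_value (A B : K -> Prop) w :
  is_Rmodule R A -> is_Rmodule R B -> subsetK A B ->
  B w -> ~ A w -> values A (v w) ->
  exists w', [/\ B w', ~ A w', w' != 0 & v w < v w'].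
Proof.
move=> HA HB sAB Bw nAw [a [Aa na va]].
have [r Rr hr] := residual_approx na va.
have Ara : A (r * a) by apply: (RmoduleM HA).
have nAw' : ~ A (w - r * a).
  by move=> Aw'; apply: nAw; rewrite -(subrK (r * a) w); apply: (RmoduleD HA).
have nw' : w - r * a != 0 by apply/eqP => w0; apply: nAw'; rewrite w0; apply: Rmodule0 HA.
exists (w - r * a); split=> //; first by apply: (RmoduleB HR HB) => //; apply: sAB.
by move: hr => /(val_geE _ _ nw'); rewrite lezD1.
Qed.

Variables (N M : K -> Prop) (lo hi : int).
Hypotheses (HN : is_Rmodule R N) (HM : is_Rmodule R M).
Hypothesis M_lo : forall z, M z -> val_ge v lo z.
Hypothesis M_hi : forall z, M z -> val_ge v hi z -> N z.

Definition value_gap (y : int) := values M y /\ ~ values N y.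

Lemma value_gap_of_strict_inclusion (A B : K -> Prop) w :
  is_Rmodule R A -> is_Rmodule R B -> subsetK N A -> subsetK B M -> subsetK A B ->
  B w -> ~ A w -> exists y, [/\ lo <= y < hi, values B y & ~ values A y].
Proof.
move=> HA HB sNA sBM sAB.
suff Hd (d : nat) w' : B w' -> ~ A w' -> hi - v w' <= d%:Z ->
    exists y, [/\ lo <= y < hi, values B y & ~ values A y].
  by move=> Bw nAw; apply: (Hd `|hi - v w|%N w Bw nAw); move: (hi - v w); lia.
elim: d w' => [|d IH] w' Bw' nAw' hd;
  have nw' : w' != 0 by apply/eqP => w0; apply: nAw'; rewrite w0; apply: Rmodule0 HA.
all: have lo_w' : lo <= v w' by have := M_lo (sBM _ Bw'); rewrite val_geE.
all: have w'_hi : v w' < hi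
  by rewrite ltNge; apply/negP => h; apply/nAw'/sNA/M_hi; [apply: sBM | right].
- by exfalso; move: hd w'_hi; move: (v w'); lia.
- have [hv|hv] := pselect (values A (v w')); last by exists (v w'); split; [lia|exists w'|].
  have [w'' [Bw'' nAw'' nw'' lt_w']] := raise_value HA HB sAB Bw' nAw' hv.
  by apply: (IH w'') => //; move: hd lt_w'; move: (v w') (v w''); lia.
Qed.

Lemma strict_chain_sub m f : strict_chain R N M m f ->
  forall i j, (i <= j <= m)%N -> subsetK (f i) (f j).
Proof.
case=> _ _ _ Hs i j /andP [le_ij le_jm].
elim: j le_ij le_jm => [|j IH] le_ij le_jm; first by move: le_ij; rewrite leqn0 => /eqP ->.
case: (ltngtP i j.+1) le_ij => // [lt_ij|<-] _ //.
by move=> z /(IH lt_ij (ltnW le_jm)); apply: (proj1 (Hs j le_jm)).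
Qed.

(* Each step of a strict chain contributes a new gap value. *)
Lemma strict_chain_gaps m f : strict_chain R N M m f ->
  exists s : seq int, [/\ size s = m, uniq s &
    forall y, y \in s -> lo <= y < hi /\ value_gap y].
Proof.
move=> Hc; have Hsub := strict_chain_sub Hc; case: Hc => H0 Hm Hmod Hs.
have sNf i : (i <= m)%N -> subsetK N (f i).
  by move=> le_im z Nz; apply: (Hsub 0%N); [|apply/H0].
have sfM i : (i <= m)%N -> subsetK (f i) M.
  by move=> le_im z fz; apply/Hm; apply: (Hsub i m) => //; rewrite le_im leqnn.
suff H i : (i <= m)%N -> exists s : seq int, [/\ size s = i, uniq s &
    forall y, y \in s -> [/\ lo <= y < hi, values (f i) y & ~ values N y]].
  have [s [s_m us Hy]] := H m (leqnn m); exists s; split=> // y /Hy [? fy nN].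
  by split=> //; split=> //; apply: valuesS fy; apply: sfM.
elim: i => [|i IH] le_im; first by exists [::].
have [s [s_i us Hy]] := IH (ltnW le_im).
have [sub [w [fw nfw]]] := Hs i le_im.
have [y [hy By nAy]] := value_gap_of_strict_inclusion (Hmod i (ltnW le_im)) (Hmod i.+1 le_im)
  (sNf i (ltnW le_im)) (sfM i.+1 le_im) sub fw nfw.
exists (y :: s); split=> /=; first by rewrite s_i.
  by rewrite us andbT; apply/negP => /Hy [].
move=> y'; rewrite inE => /orP [/eqP ->|/Hy [? fy' ?]]; last by split=> //; apply: valuesS fy'.
by split=> // /(valuesS (sNf i (ltnW le_im))).
Qed.

Hypothesis sNM : subsetK N M.
Hypothesis le_lo_hi : lo <= hi.

Definition gap_seq := [seq y <- [seq lo + i%:Z | i <- iota 0 `|hi - lo|] | `[< value_gap y >]].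

Lemma mem_gap_seq y : (y \in gap_seq) = (lo <= y < hi) && `[< value_gap y >].
Proof.
rewrite mem_filter andbC; congr (_ && _); apply/mapP/idP.
  by case=> i; rewrite mem_iota add0n => lt_i ->; move: lt_i le_lo_hi; lia.
move=> hy; exists `|y - lo|%N; first by rewrite mem_iota add0n; move: hy le_lo_hi; lia.
by move: hy; lia.
Qed.

Lemma gap_seq_sorted : sorted <%R gap_seq.
Proof.
apply: lt_sorted_filter; apply: (homo_sorted (e := ltn)); last exact: iota_ltn_sorted.
by move=> a b lt_ab; rewrite ltrD2l ltz_nat.
Qed.

Let p := size gap_seq.

(* The chain N + M_{>= t_j}, with t_0 = hi and t_1 > t_2 > ... > t_p the gap values. *)
Let threshold (j : nat) := if j == 0%N then hi else nth 0 gap_seq (p - j)%N.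
Let gap_chain (j : nat) := Rmodule_plus N (fun z => M z /\ val_ge v (threshold j) z).

Lemma threshold_gap j : (j < p)%N -> threshold j.+1 \in gap_seq /\ threshold j.+1 < threshold j.
Proof.
move=> lt_jp; rewrite /threshold /=.
have lt_p : (p - j.+1 < p)%N by lia.
split; first exact: mem_nth.
have := mem_nth 0 lt_p; rewrite mem_gap_seq => /andP [/andP [_ lt_hi] _].
have [j0|nj] := eqVneq j 0%N; first by subst j.
rewrite (lt_sorted_ltn_nth 0 gap_seq_sorted) ?inE.
all: by move: lt_jp nj; rewrite /p -lt0n; move: (size gap_seq); lia.
Qed.

Lemma threshold_min y : y \in gap_seq -> threshold p <= y.
Proof.
move=> gy; have p_gt0 : (0 < p)%N by rewrite /p; case: (gap_seq) gy.
rewrite /threshold (negbTE (lt0n_neq0 p_gt0)) subnn -(nth_index 0 gy).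
have [-> //|ni] := eqVneq (index y gap_seq) 0%N.
by apply/ltW; rewrite (lt_sorted_ltn_nth 0 gap_seq_sorted) ?inE ?index_mem // lt0n.
Qed.

Lemma gap_chain_strict : strict_chain R N M p gap_chain.
Proof.
have Mge_mod h : is_Rmodule R (fun z => M z /\ val_ge v h z).
  exact: Rmodule_meet (val_ge_Rmodule HR Hval h).
have fmod j : is_Rmodule R (gap_chain j) by apply: Rmodule_plus_Rmodule.
have sNf j : subsetK N (gap_chain j) by move=> z; apply: Rmodule_plusl.
have sfM j : subsetK (gap_chain j) M.
  by move=> _ [a [b [Na [Mb _] ->]]]; apply: (RmoduleD HM) => //; apply: sNM.
split=> [z | z | i _ // | i lt_ip].
- split; last exact: sNf.
  by case=> a [b [Na [Mb hb] ->]]; apply: (RmoduleD HN) => //; apply: M_hi.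
- split=> [|Mz]; first exact: sfM.
  apply: contrapT => nfz.
  have [y [hy [a [Ma na va]] nfy]] := value_gap_of_strict_inclusion (fmod p) HM (sNf p)
    (fun _ h => h) (sfM p) Mz nfz.
  have gy : y \in gap_seq.
    rewrite mem_gap_seq hy; apply/asboolP; split; first by exists a.
    by apply: contra_not nfy; apply: valuesS.
  apply: nfy; exists a; split=> //; exists 0, a; rewrite add0r.
  split=> //; first exact: Rmodule0 HN.
  by split=> //; right; rewrite va; apply: threshold_min.
- have [gi lt_i] := threshold_gap lt_ip; split.
    move=> _ [a [b [Na [Mb hb] ->]]]; exists a, b; split=> //; split=> //.
    by apply: val_ge_le hb; apply: ltW.
  move: gi; rewrite mem_gap_seq => /andP [_ /asboolP [[w [Mw nw vw]] nNw]].
  exists w; split.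
    by exists 0, w; rewrite add0r; split=> //; [apply: Rmodule0 HN | split=> //; right; rewrite vw].
  case=> a [b [Na [Mb hb] ew]]; apply: nNw.
  have [b0|nb] := eqVneq b 0; first by exists w; split=> //; rewrite ew b0 addr0.
  have nNb : - b != 0 by rewrite oppr_eq0.
  have lt_wb : v w < v (- b).
    by rewrite (vN Hval) // vw; apply: lt_le_trans lt_i _; rewrite -val_geE.
  have ea : a = w + - b by rewrite ew addrK.
  have [na vab] := vDl_lt Hval nw nNb lt_wb.
  by exists a; split=> //; rewrite ea // vab.
Qed.

Theorem length_of_value_gaps :
  length_of R N M (count (fun i : nat => `[< value_gap (lo + i%:Z) >]) (iota 0 `|hi - lo|)).
Proof.
have -> : count (fun i : nat => `[< value_gap (lo + i%:Z) >]) (iota 0 `|hi - lo|) = p.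
  by rewrite /p /gap_seq size_filter count_map.
split; first by exists gap_chain; apply: gap_chain_strict.
move=> m f /strict_chain_gaps [s [<- us Hs]]; apply: uniq_leq_size => // y /Hs [hy gy].
by rewrite mem_gap_seq hy; apply/asboolP.
Qed.

End ValueGaps.

Lemma length_of_value_gaps0 (K : fieldType) (R : K -> Prop) (v : K -> int)
    (N M : K -> Prop) (hi : nat) :
  is_subring R -> normalized_valuation_of (Rbar R) v -> residually_rational R v ->
  is_Rmodule R N -> is_Rmodule R M -> subsetK N M ->
  (forall z, M z -> val_ge v 0 z) -> (forall z, M z -> val_ge v hi z -> N z) ->
  length_of R N M (count (fun i : nat => `[< value_gap v N M i%:Z >]) (iota 0 hi)).
Proof.
move=> HR Hval Hres HN HM sNM M_lo M_hi.
have := length_of_value_gaps HR Hval Hres HN HM M_lo M_hi sNM (lez_nat 0 hi).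
by rewrite subr0 absz_nat; under eq_count => i do rewrite add0r.
Qed.

Lemma length_of_uniq (K : fieldType) (R N M : K -> Prop) a b :
  length_of R N M a -> length_of R N M b -> a = b.
Proof. by move=> [[f Hf] Ha] [[g Hg] Hb]; apply/eqP; rewrite eqn_leq (Hb _ _ Hf) (Ha _ _ Hg). Qed.

Lemma strict_chain_cat (K : fieldType) (R N M P : K -> Prop) a b f g :
  strict_chain R N M a f -> strict_chain R M P b g ->
  strict_chain R N P (a + b) (fun i => if (i <= a)%N then f i else g (i - a)%N).
Proof.
move=> [f0 fa fm fs] [g0 gb gm gs]; split=> [z | z | i le_i | i lt_i] /=.
- exact: f0.
- case: ifP => [le_ab|_]; last by rewrite addKn; apply: gb.
  have b0 : b = 0%N by lia.
  by rewrite b0 addn0 fa -g0; move: (gb z); rewrite b0.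
- by case: ifP => le_ia; [apply: fm | apply: gm; lia].
- case: (ltngtP i a) => [lt_ia | lt_ai | ia].
  + exact: fs.
  + by rewrite subSn ?(ltnW lt_ai) //; apply: gs; lia.
  + subst i; rewrite subSnn; have b_gt0 : (0 < b)%N by lia.
    have [gsub [w [g1w ng0w]]] := gs 0%N b_gt0.
    split=> [z /fa /g0|]; first exact: gsub.
    by exists w; split=> // /fa /g0.
Qed.

Lemma length_of_gt0 (K : fieldType) (R N M : K -> Prop) n w :
  is_Rmodule R N -> is_Rmodule R M -> subsetK N M -> M w -> ~ N w ->
  length_of R N M n -> (0 < n)%N.
Proof.
move=> HN HM sNM Mw nNw [_ Hmax]; apply: (Hmax 1%N (fun i => if i == 0%N then N else M)).
by split=> // -[|i] // _; split=> //; exists w.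
Qed.

Lemma count_eq0_in (T : eqType) (P : pred T) (l : seq T) :
  {in l, forall y, ~~ P y} -> count P l = 0%N.
Proof. by move=> Hl; rewrite (eq_in_count (a2 := pred0)) ?count_pred0 // => y /Hl /negbTE. Qed.

Lemma sub_in_count (T : eqType) (a1 a2 : pred T) (l : seq T) :
  {in l, subpred a1 a2} -> (count a1 l <= count a2 l)%N.
Proof.
elim: l => //= y l IH H; apply: leq_add; last by apply: IH => z zl; apply: H; rewrite inE zl orbT.
by case: (boolP (a1 y)) => [/(H y (mem_head y l)) -> | _].
Qed.

Lemma size_uniq_int_le (l : seq int) a b : uniq l ->
  {in l, forall y, exists2 i : nat, y = i%:Z & (a <= i < a + b)%N} -> (size l <= b)%N.
Proof.
move=> ul Hl; rewrite -(size_iota a b) -(size_map Posz).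
apply: uniq_leq_size => // y /Hl [i -> le_i].
by apply: map_f; rewrite mem_iota.
Qed.

Section Numerical.
Local Open Scope nat_scope.
Variables (S : nat -> Prop) (s : nat -> nat).

Lemma conductor_exp_ge c y : conductor_exp S c -> (c <= y)%N -> S y.
Proof. by case=> [[_ Sc]] _ le_cy; rewrite -(subnKC le_cy). Qed.

Lemma same_residue_shift e i j : i < j -> i %% e = j %% e -> exists m, j = i + m.+1 * e.
Proof.
move=> lt_ij eq_mod; have ei := divn_eq i e; have ej := divn_eq j e; rewrite eq_mod in ei.
have := ltn_mul2r e (i %/ e) (j %/ e).
move: ei ej; move: (i %/ e) (j %/ e) (j %% e) => p q t ei ej.
have -> : p * e < q * e by lia.
case/esym/andP => e_gt0 lt_pq; exists (q - p).-1.
by rewrite prednK ?subn_gt0 // mulnBl; lia.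
Qed.

(* Elements y >= e of S with y - e outside S lie in distinct nonzero residue classes mod e. *)
Lemma apery_count_le e (P : pred nat) (l : seq nat) :
  (0 < e)%N -> S 0 -> (forall y, S y -> S (y + e)%N) -> uniq l ->
  {in l, forall y, P y -> [/\ S y, (e <= y)%N & ~ S (y - e)]} ->
  (count P l <= e.-1)%N.
Proof.
move=> e_gt0 S0 SDe ul HP.
have SMe m y : S y -> S (y + m * e)%N.
  by move=> Sy; elim: m => [|m IH]; rewrite ?addn0 // mulSnr addnA; apply: SDe.
have Hf y : y \in filter P l -> [/\ S y, (e <= y)%N & ~ S (y - e)].
  by rewrite mem_filter => /andP [Py ly]; apply: HP.
have inj : {in filter P l &, injective (modn^~ e)}.
  move=> y y' /Hf [Sy _ nSy] /Hf [Sy' _ nSy'] eq_mod.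
  have shift z z' : (z < z')%N -> z %% e = z' %% e -> S z -> ~ S (z' - e) -> False.
    move=> lt_z /(same_residue_shift lt_z) [m ->] Sz; apply.
    by rewrite mulSnr addnA addnK; apply: SMe.
  by case: (ltngtP y y') => // [lt_y|lt_y]; [case: (shift y y') | case: (shift y' y)].
have sub : {subset map (modn^~ e) (filter P l) <= iota 1 e.-1}.
  move=> _ /mapP [y /Hf [Sy le_ey nSy] ->]; rewrite mem_iota add1n prednK // ltn_pmod // andbT.
  rewrite lt0n; apply: contra_notN nSy => /dvdnP [q ey].
  by rewrite ey -{2}(mul1n e) -mulnBl -[_ * e]add0n; apply: SMe.
have := uniq_leq_size _ sub; rewrite size_map size_iota size_filter; apply.
by rewrite map_inj_in_uniq // filter_uniq.
Qed.

Hypothesis Hs : enumerates S s.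

Lemma enumerates_ltE i j : (s i < s j)%N = (i < j)%N.
Proof.
case: Hs => _ s_lt _; have s_homo := homo_ltn ltn_trans s_lt.
case: (ltngtP i j) => [/s_homo -> //|/s_homo lt_ji|->]; last exact: ltnn.
by apply/negbTE; rewrite -leqNgt ltnW.
Qed.

Lemma count_enumerates i : count (fun y => `[< S y >]) (iota 0 (s i)) = i.
Proof.
have notS y j : (y < s j)%N -> S y -> exists2 l, (l < j)%N & s l = y.
  by case: Hs => _ _ Sall lt_y /Sall [l el]; exists l => //; rewrite -enumerates_ltE el.
elim: i => [|i IH].
  by apply: count_eq0_in => y; rewrite mem_iota add0n => lt_y; apply/asboolP => /(notS _ _ lt_y) [].
have lt_i : (s i < s i.+1)%N by rewrite enumerates_ltE.
rewrite -(subnKC (ltnW lt_i)) iotaD count_cat IH.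
case E: (s i.+1 - s i)%N => [|L]; first by move: lt_i E; lia.
rewrite add0n /= count_eq0_in; first by case: Hs => S_s _ _; rewrite asboolT // addn0 addn1.
move=> y; rewrite mem_iota => /andP [lt_iy lt_y]; apply/asboolP => /(notS y i.+1) [|l lt_l ey].
  by move: lt_y E; lia.
by have := enumerates_ltE i l; move: lt_iy lt_l; rewrite -ey; lia.
Qed.
End Numerical.

Section Conductor.
Variables (K : fieldType) (R : K -> Prop) (v : K -> int) (c e : nat).
Hypotheses (HR : is_subring R) (Hval : normalized_valuation_of (Rbar R) v).

Local Notation S := (value_set R v).

Lemma value_setD y z : S y -> S z -> S (y + z)%N.
Proof.
move=> [a [Ra na va]] [b [Rb nb vb]]; exists (a * b).
by rewrite (vM Hval) // va vb mulf_neq0 //; split=> //; apply: subringM.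
Qed.

Lemma value_setMn m y : S y -> S (m * y)%N.
Proof.
move=> Sy; elim: m => [|m IH]; last by rewrite mulSn; apply: value_setD.
by exists 1; rewrite (v1 Hval) oner_neq0; split=> //; apply: subring1.
Qed.

Lemma subring_val_nat z : R z -> z != 0 -> exists n : nat, v z = n%:Z /\ S n.
Proof.
move=> Rz nz; have := subring_val_ge0 HR Hval Rz; rewrite val_geE // => vz.
exists `|v z|%N; split; first by move: vz; move: (v z); lia.
by exists z; split=> //; move: vz; move: (v z); lia.
Qed.

Lemma max_ideal_pos_val a : R a -> a != 0 -> 0 < v a -> max_ideal R a.
Proof.
move=> Ra na va; split=> // -[_ [b [Rb ab1]]].
have nb : b != 0 by apply: contra_eq_neq ab1 => ->; rewrite mulr0 eq_sym oner_neq0.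
have := subring_val_ge0 HR Hval Rb; rewrite val_geE // => vb.
by move: (vM Hval na nb); rewrite ab1 (v1 Hval); move: va vb; move: (v a) (v b); lia.
Qed.

Hypotheses (Hqf : quotient_field_of R) (Hfg : fg_module R (Rbar R)).
Hypothesis Hres : residually_rational R v.
Hypothesis Hc : conductor_exp S c.

(* Values above v b lie in b Rbar <= R; below that, subtract an element of R of the same value
   and induct on the distance to v b. *)
Lemma conductor_val_ge_R z : val_ge v c z -> R z.
Proof.
have [b [Rb nb] bR] := common_denominator HR Hqf Hfg.
suff Hd (d : nat) w : val_ge v c w -> val_ge v (v b - d%:Z) w -> R w.
  by move=> cz; apply: (Hd `|v b - c%:Z|%N) => //; apply: val_ge_le cz; lia.
elim: d w => [|d IH] w cw bw; have [->|nw] := eqVneq w 0; try exact: subring0 HR.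
  have nwb : w / b != 0 by rewrite mulf_neq0 ?invr_neq0.
  rewrite -(divfK nb w) mulrC; apply/bR/(RbarP HR Hval)/(val_geE _ _ nwb).
  by rewrite (v_div Hval) // subr_ge0; move/(val_geE _ _ nw): bw; rewrite subr0.
move/(val_geE _ _ nw): cw => cw; move/(val_geE _ _ nw): bw => bw.
have [a [Ra na va]] : S `|v w|%N by apply: conductor_exp_ge Hc _; move: cw; move: (v w); lia.
have vaw : v a = v w by rewrite va; move: cw; move: (v w); lia.
have [r Rr hr] := residual_approx HR Hval Hres na vaw.
rewrite -(subrK (r * a) w); apply: (subringD HR); last exact: subringM.
by apply: IH; apply: val_ge_le hr; move: cw bw; move: (v w); lia.
Qed.

Lemma conductorP z : conductor R z <-> val_ge v c z.
Proof.
split=> [Cz|cz b /(RbarP HR Hval) b0]; last first.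
  by apply: conductor_val_ge_R; rewrite -[c%:Z]addr0; apply: (val_geM Hval).
have [->|nz] := eqVneq z 0; first exact: val_ge0.
have Rz : R z by rewrite -[z]mulr1; apply: Cz; apply/(subring_Rbar HR)/(subring1 HR).
have [n [vz Sn]] := subring_val_nat Rz nz.
have [t [nt vt]] := v_onto Hval 1.
rewrite val_geE // vz lez_nat; case: Hc => _; apply; split=> // m.
have ntm : t ^+ m != 0 by rewrite expf_neq0.
exists (z * t ^+ m); rewrite mulf_neq0 // (vM Hval) // (vX Hval) // vt vz mulr1.
split=> //; apply/Cz/(RbarP HR Hval); right.
by rewrite (vX Hval) // vt mulr1.
Qed.

Lemma conductor_sub_R : subsetK (conductor R) R.
Proof. by move=> z /conductorP; apply: conductor_val_ge_R. Qed.

Lemma conductor_Rmodule : is_Rmodule R (conductor R).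
Proof. exact/colon_Rmodule/subring_Rmodule. Qed.

Hypothesis He : least_pos S e.

Lemma max_ideal_val_ge a : max_ideal R a -> val_ge v e a.
Proof.
move=> [Ra nu]; have [->|na] := eqVneq a 0; first exact: val_ge0.
have [n [vn Sn]] := subring_val_nat Ra na.
rewrite val_geE // vn lez_nat; case: He => _ _; apply=> //.
by rewrite lt0n; apply/eqP => n0; apply: nu; apply: (unit_of_val0 HR Hval Ra na); rewrite vn n0.
Qed.

Hypotheses (Hloc : is_local R) (Hnreg : ~ is_regular R).

(* If e = 1, an element of value 1 generates the maximal ideal. *)
Lemma multiplicity_ge2 : (2 <= e)%N.
Proof.
case: He => e_gt0 Se _; case: (ltngtP e 1) => // [|e1]; first by lia.
have [x [Rx nx vx]] := Se.
have c0 : c = 0%N.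
  apply/eqP; rewrite -leqn0; case: Hc => _; apply; split=> [|m].
    by have := value_setMn 0 Se; rewrite mul0n.
  by have := value_setMn m Se; rewrite e1 muln1 add0n.
case: Hnreg; exists x => z; split=> [mz|[a [Ra ->]]].
  have [->|nz] := eqVneq z 0; first by exists 0; rewrite mul0r; split=> //; apply: subring0.
  have nzx : z / x != 0 by rewrite mulf_neq0 ?invr_neq0.
  exists (z / x); rewrite divfK //; split=> //; apply: conductor_val_ge_R.
  rewrite c0 (val_geE _ _ nzx) (v_div Hval) // subr_ge0 vx.
  by rewrite -(val_geE _ _ nz); apply: max_ideal_val_ge.
have mx : max_ideal R x by apply: max_ideal_pos_val; rewrite // vx e1.
by case: Hloc => _ Hm; apply: (RmoduleM Hm Ra mx).
Qed.

Lemma conductor_gt0 : (0 < c)%N.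
Proof.
rewrite lt0n; apply/eqP => c0.
have S1 : S 1 by apply: (conductor_exp_ge Hc); rewrite c0.
by case: He => _ _ /(_ 1%N isT S1); have := multiplicity_ge2; lia.
Qed.

Lemma multiplicity_le_conductor : (e <= c)%N.
Proof. by case: He => _ _; apply; [exact: conductor_gt0 | exact: conductor_exp_ge Hc _]. Qed.

Lemma conductor_pred_notin : ~ S c.-1.
Proof.
move=> Sc1; have c_gt0 := conductor_gt0.
suff : (c <= c.-1)%N by lia.
case: Hc => _; apply; split=> // -[|m]; first by rewrite addn0.
by apply: (conductor_exp_ge Hc); lia.
Qed.
End Conductor.

Section Lengths.
Variables (K : fieldType) (R : K -> Prop) (v : K -> int) (s : nat -> nat) (c e delta j0 : nat).
Hypotheses (HR : is_subring R) (Hqf : quotient_field_of R) (Hloc : is_local R)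
  (Hnreg : ~ is_regular R) (Hfg : fg_module R (Rbar R))
  (Hval : normalized_valuation_of (Rbar R) v) (Hres : residually_rational R v).

Local Notation S := (value_set R v).
Local Notation inS y := `[< S y >].

Hypotheses (Hs : enumerates S s) (Hc : conductor_exp S c) (He : least_pos S e).

Let c_ge_e : (e <= c)%N := multiplicity_le_conductor HR Hval Hqf Hfg Hres Hc He Hloc Hnreg.
Let e_ge2 : (2 <= e)%N := multiplicity_ge2 HR Hval Hqf Hfg Hres Hc He Hloc Hnreg.
Let conductorE : forall z, conductor R z <-> val_ge v c z := conductorP HR Hval Hqf Hfg Hres Hc.
Let val_ge_c_R : forall z, val_ge v c z -> R z := conductor_val_ge_R HR Hval Hqf Hfg Hres Hc.

Lemma colon_conductor_val_ge (B : K -> Prop) (h : int) z :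
  (forall b, B b -> val_ge v h b) -> val_ge v (c%:Z - h) z -> colon (conductor R) B z.
Proof. by move=> Bh hz b /Bh hb; apply/conductorE; have := val_geM Hval hz hb; rewrite subrK. Qed.

Lemma colon_val_ge (B : K -> Prop) (h : int) z :
  (forall b, B b -> val_ge v h b) -> val_ge v (c%:Z - h) z -> colon R B z.
Proof. by move=> Bh hz b Bb; apply/val_ge_c_R/conductorE/(colon_conductor_val_ge Bh hz). Qed.

Lemma conductor_values_ge (i : nat) : values v (conductor R) i -> (c <= i)%N.
Proof. by case=> z [/conductorE cz nz vz]; move: cz; rewrite val_geE // vz lez_nat. Qed.

Hypothesis Hdelta : length_of R R (Rbar R) delta.

Lemma delta_count : delta = count (predC (fun y => inS y)) (iota 0 c).
Proof.
have := length_of_value_gaps0 HR Hval Hres (subring_Rmodule HR) (Rbar_Rmodule HR Hval)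
  (subring_Rbar HR) (fun z => proj1 (RbarP HR Hval z))
  (fun z _ => @val_ge_c_R z).
move=> /(length_of_uniq Hdelta) ->; apply: eq_in_count => i _ /=.
apply/asboolP/asboolPn => [[_ nRi] //|nSi]; split=> //.
by apply: (values_onto Hval) => z nz vz; apply/(RbarP HR Hval)/(val_geE _ _ nz); rewrite vz.
Qed.

Lemma length_count : (c - delta)%N = count (fun y => inS y) (iota 0 c).
Proof.
by rewrite delta_count; have := count_predC (fun y => inS y) (iota 0 c); rewrite size_iota; lia.
Qed.

Lemma enumerates_length : s (c - delta) = c.
Proof.
have [i ei] := (let: And3 _ _ Sall := Hs in Sall) c (conductor_exp_ge Hc (leqnn c)).
by rewrite length_count -ei count_enumerates.
Qed.

Hypothesis Hj0 : (c - e <= s j0)%N /\ forall j, (c - e <= s j)%N -> (s j0 <= s j)%N.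

Lemma j0_count : count (fun y => inS y) (iota 0 (c - e)) = j0.
Proof.
case: Hj0 => le_j0 j0_min.
rewrite -[in RHS](count_enumerates Hs j0) -(subnKC le_j0) iotaD count_cat add0n.
rewrite [X in (_ + X)%N]count_eq0_in ?addn0 // => y.
rewrite mem_iota subnKC // => /andP [lo_y hi_y].
apply/asboolP; case: Hs => _ _ /[apply] -[j ej]; have := j0_min j; rewrite ej; lia.
Qed.

Lemma top_count : count (fun y => inS y) (iota (c - e) e) = (c - delta - j0)%N.
Proof.
rewrite length_count -j0_count -[c in iota 0 c](subnKC (leq_subr e c)) iotaD count_cat.
by rewrite subKn // addKn.
Qed.

Lemma j0_le_length : (j0 <= c - delta)%N.
Proof.
rewrite length_count -[c in iota 0 c](subnKC (leq_subr e c)) iotaD count_cat.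
by rewrite j0_count leq_addr.
Qed.

Section MultiplicityElement.
Variables (x : K) (k r : nat).
Hypotheses (Hxm : max_ideal R x) (Hx0 : x != 0) (Hvx : v x = e%:Z).

Local Notation Cx := (plus_mul (conductor R) R x).

Lemma plus_mul_Rmodule : is_Rmodule R Cx.
Proof.
have HC := conductor_Rmodule HR.
split; first by exists 0, 0; rewrite mulr0 addr0; split; [apply: Rmodule0 HC | apply: subring0 |].
- move=> _ _ [a [b [Ca Rb ->]]] [a' [b' [Ca' Rb' ->]]]; exists (a + a'), (b + b').
  by rewrite mulrDr addrACA; split; [apply: (RmoduleD HC) | apply: subringD |].
- move=> q _ Rq [a [b [Ca Rb ->]]]; exists (q * a), (q * b).
  by rewrite mulrDr mulrCA; split; [apply: (RmoduleM HC) | apply: subringM |].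
Qed.

Lemma plus_mul_values (i : nat) : (i < c)%N ->
  values v Cx i <-> (e <= i)%N /\ S (i - e).
Proof.
move=> lt_ic; split=> [[_ [[a [b [Ca Rb ->]]] nz vz]] | [le_ei [b [Rb nb vb]]]]; last first.
  exists (x * b); rewrite mulf_neq0 // (vM Hval) // Hvx vb -PoszD subnKC //.
  by split=> //; exists 0, b; rewrite add0r; split=> //; apply/conductorE/val_ge0.
have [nxb vxb] : x * b != 0 /\ v (x * b) = i.
  have [a0|na] := eqVneq a 0; first by move: nz vz; rewrite a0 add0r.
  have lt_za : v (a + x * b) < v (- a).
    rewrite (vN Hval) // vz; move/conductorE: Ca.
    by rewrite val_geE //; apply: lt_le_trans; rewrite ltz_nat.
  have nNa : - a != 0 by rewrite oppr_eq0.
  have [] := vDl_lt Hval nz nNa lt_za.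
  by rewrite addrC addKr vz.
have nb : b != 0 by apply: contra_neq nxb => ->; rewrite mulr0.
have [n [vb Sn]] := subring_val_nat HR Hval Rb nb.
move: vxb; rewrite (vM Hval) // Hvx vb -PoszD => /eqP; rewrite eqz_nat => /eqP <-.
by rewrite leq_addr addKn.
Qed.

Hypothesis Hk : length_of R Cx R k.

Lemma count_shifted : count (fun i => (e <= i)%N && inS (i - e)) (iota 0 c) = j0.
Proof.
rewrite -[c in iota 0 c](subnKC c_ge_e) iotaD count_cat count_eq0_in ?add0n; last first.
  by move=> i; rewrite mem_iota add0n => /andP [_ lt_ie]; rewrite leqNgt lt_ie.
rewrite -j0_count -[e in iota e](addn0 e) iotaDl count_map.
by apply: eq_count => i /=; rewrite leq_addr addKn.
Qed.

(* Below c the values of C + xR are e + S, so the gaps are the elements of S not in e + S. *)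
Lemma k_count : k = (c - delta - j0)%N.
Proof.
have sub : subsetK Cx R.
  move=> _ [a [b [Ca Rb ->]]]; apply: subringD (conductor_sub_R HR Hval Hqf Hfg Hres Hc Ca) _ => //.
  exact: subringM (let: conj Rx _ := Hxm in Rx) Rb.
have Cx_hi z : R z -> val_ge v c z -> Cx z.
  move=> _ cz; exists z, 0; rewrite mulr0 addr0.
  by split=> //; [apply/conductorE | apply: subring0].
have := length_of_value_gaps0 HR Hval Hres plus_mul_Rmodule (subring_Rmodule HR) sub
  (fun z => subring_val_ge0 HR Hval (z := z)) Cx_hi.
move=> /(length_of_uniq Hk) ->.
set P := fun i => (e <= i)%N && inS (i - e).
have P_S i : P i -> inS i.
  case/andP => le_ei /asboolP Sie; apply/asboolP; rewrite -(subnK le_ei).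
  have Se : S e by case: He.
  exact: (value_setD HR Hval Sie Se).
transitivity (count (predC P) (filter (fun i => inS i) (iota 0 c))).
  rewrite count_filter; apply: eq_in_count => i; rewrite mem_iota add0n => lt_ic /=.
  apply/asboolP/andP => [[Si nCi] | [nPi Si]].
    split; last exact/asboolP.
    by apply/negP => /andP [le_ei /asboolP Sie]; apply/nCi/(plus_mul_values lt_ic).
  split; first exact/asboolP.
  by move/(plus_mul_values lt_ic) => [le_ei Sie]; case/negP: nPi; rewrite /P le_ei; apply/asboolP.
have := count_predC P (filter (fun i => inS i) (iota 0 c)).
rewrite size_filter -length_count count_filter (eq_count (a2 := P)) ?count_shifted; first by lia.
by move=> i /=; apply/andP/idP => [[]//|Pi]; split=> //; apply: P_S.
Qed.

Local Notation m := (max_ideal R).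
Local Notation Cm := (colon_in R (conductor R) m).

Let m_sub_R : subsetK m R := fun _ mb => let: conj Rb _ := mb in Rb.
Let m_val_ge : forall b, m b -> val_ge v e b := max_ideal_val_ge HR Hval He.

Lemma colon_in_values (i : nat) : (i < c)%N -> values v Cm i <-> S i /\ (c <= i + e)%N.
Proof.
move=> lt_ic; split=> [[z [[Rz Cz] nz vz]] | [[a [Ra na va]] le_c]].
  split; first by exists z.
  apply: conductor_values_ge; exists (z * x); rewrite mulf_neq0 // (vM Hval) // vz Hvx -PoszD.
  by split=> //; apply: Cz.
exists a; split=> //; split=> //; apply: colon_conductor_val_ge m_val_ge _.
by right; rewrite va lerBlDr -PoszD lez_nat.
Qed.

Lemma colength_conductor : length_of R (conductor R) Cm (c - delta - j0).
Proof.
have HC := conductor_Rmodule HR.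
have sCCm : subsetK (conductor R) Cm.
  move=> z Cz; split=> [|b /m_sub_R Rb]; first exact: conductor_sub_R HR Hval Hqf Hfg Hres Hc z Cz.
  by rewrite mulrC; apply: (RmoduleM HC).
have HCm : is_Rmodule R Cm.
  exact: Rmodule_meet (subring_Rmodule HR) (colon_Rmodule m HC).
have := length_of_value_gaps0 HR Hval Hres HC HCm sCCm
  (fun z Cmz => subring_val_ge0 HR Hval (proj1 Cmz)) (fun z _ cz => proj2 (conductorE z) cz).
suff -> : count (fun i : nat => `[< value_gap v (conductor R) Cm i >]) (iota 0 c)
    = count (fun y => inS y) (iota (c - e) e) by rewrite top_count.
rewrite -[c in iota 0 c](subnKC (leq_subr e c)) iotaD count_cat count_eq0_in ?add0n; last first.
  move=> i; rewrite mem_iota add0n => /andP [_ lt_i]; have lt_ic : (i < c)%N by lia.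
  by apply/asboolPn => -[/(colon_in_values lt_ic) [_ le_c] _]; lia.
rewrite subKn //; apply: eq_in_count => i; rewrite mem_iota subnK // => /andP [le_i lt_ic].
apply/asboolP/asboolP => [[/(colon_in_values lt_ic) [] //] | Si].
split; first by apply/colon_in_values => //; split=> //; lia.
by move/conductor_values_ge; lia.
Qed.

Local Notation Rm := (colon R m).

Lemma colon_max_val_ge z : Rm z -> val_ge v (- e%:Z) z.
Proof.
move=> Rmz; have [->|nz] := eqVneq z 0; first exact: val_ge0.
have := subring_val_ge0 HR Hval (Rmz x Hxm); rewrite !val_geE ?mulf_neq0 // (vM Hval) // Hvx.
by rewrite -lerBlDr sub0r.
Qed.

Hypothesis Hr : length_of R R Rm r.

Lemma r_count : r = count (fun i : nat => `[< value_gap v R Rm (- e%:Z + i%:Z) >]) (iota 0 (c + e)).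
Proof.
have sRRm : subsetK R Rm by move=> z Rz b /m_sub_R Rb; apply: subringM.
have le_lo_hi : - e%:Z <= c%:Z by apply: le_trans (lez_nat 0 c); rewrite oppr_le0.
have := length_of_value_gaps HR Hval Hres (subring_Rmodule HR)
  (colon_Rmodule m (subring_Rmodule HR))
  colon_max_val_ge (fun z _ cz => val_ge_c_R cz) sRRm le_lo_hi.
by move=> /(length_of_uniq Hr) ->; rewrite opprK -PoszD absz_nat.
Qed.

(* An element of (R : m) of value -e would make the maximal ideal principal. *)
Lemma colon_max_gap (i : nat) : value_gap v R Rm (- e%:Z + i%:Z) ->
  [/\ S i, (e <= i)%N & ~ S (i - e)].
Proof.
move=> [[z [Rmz nz vz]] nRi].
have nzx : z * x != 0 by rewrite mulf_neq0.
have vzx : v (z * x) = i by rewrite (vM Hval) // vz Hvx addrAC addNr add0r.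
have Si : S i by exists (z * x); split=> //; apply: Rmz.
have le_ei : (e <= i)%N.
  rewrite leqNgt; apply/negP => lt_ie; have i0 : i = 0%N.
    apply/eqP; rewrite -leqn0 leqNgt; apply/negP => i_gt0.
    by case: He => _ _ /(_ i i_gt0 Si); lia.
  have [_ [u [Ru zxu]]] := unit_of_val0 HR Hval (Rmz x Hxm) nzx (etrans vzx (congr1 Posz i0)).
  apply: Hnreg; exists z^-1 => w; split=> [mw|[a [Ra ->]]].
    by exists (z * w); split; [apply: Rmz | rewrite mulrC mulKf].
  have -> : z^-1 = u * x by apply: (mulfI nz); rewrite mulfV // -zxu; ring.
  by rewrite mulrA; case: Hloc => _ Hm; apply: (RmoduleM Hm) => //; apply: subringM.
split=> // Sie; apply: nRi; case: Sie => a [Ra na va]; exists a; split=> //.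
by rewrite va; move: le_ei; lia.
Qed.

Lemma r_le : (r <= e - 1)%N.
Proof.
have [e_gt0 Se _] := He.
rewrite r_count subn1; apply: (@apery_count_le S) => //.
- by exists 1; rewrite (v1 Hval) oner_neq0; split=> //; apply: subring1.
- by move=> y Sy; exact: (value_setD HR Hval Sy Se).
- exact: iota_uniq.
- by move=> i _ /asboolP; apply: colon_max_gap.
Qed.

Lemma r_ge : (e - r <= c - delta - j0)%N.
Proof.
rewrite r_count iotaD count_cat add0n -top_count.
have le_X : (count (predC (fun y => inS y)) (iota (c - e) e) <=
    count (fun i : nat => `[< value_gap v R Rm (- e%:Z + i%:Z) >]) (iota c e))%N.
  have -> : iota c e = map (addn e) (iota (c - e) e) by rewrite -iotaDl subnKC.
  rewrite count_map; apply: sub_in_count => i; rewrite mem_iota subnK // => /andP [le_i _] /= nSi.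
  have -> : - e%:Z + (e + i)%N%:Z = i by rewrite PoszD addKr.
  apply/asboolP; split; last by move=> Si; case/asboolPn: nSi.
  apply: (values_onto Hval) => z nz vz; apply: (colon_val_ge m_val_ge).
  by rewrite val_geE // vz lerBlDr -PoszD lez_nat; move: le_i; lia.
have := count_predC (fun y => inS y) (iota (c - e) e); rewrite size_iota; lia.
Qed.
End MultiplicityElement.

Section ColonChain.
Variable rr : nat -> nat.

Local Notation RS i := (colon R (Rsub R v s i)).

Lemma RS_Rmodule i : is_Rmodule R (RS i).
Proof. exact/colon_Rmodule/subring_Rmodule. Qed.

Lemma RS_sub i j : (s i <= s j)%N -> subsetK (RS i) (RS j).
Proof.
by move=> le_s; apply: colonS => z [Rz hz]; split=> //; apply: val_ge_le hz; rewrite lez_nat.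
Qed.

Lemma enumerates_lt_conductor i : (i < c - delta)%N -> (s i < c)%N.
Proof. by rewrite -(enumerates_ltE Hs) enumerates_length. Qed.

Hypothesis Hrr : forall i, (j0 < i <= c - delta)%N -> length_of R (RS i.-1) (RS i) (rr i).

(* An element of value c - 1 - s_(i-1) lies in RS_i but not in RS_(i-1), as c - 1 is not in S. *)
Lemma rr_gt0 i : (j0 < i <= c - delta)%N -> (0 < rr i)%N.
Proof.
case: i => [|i] hi; first by move: hi; lia.
have [S_s s_lt _] := Hs; have lt_si := s_lt i.
have lt_sc : (s i < c)%N by apply: enumerates_lt_conductor; move: hi; lia.
have [z [nz vz]] := v_onto Hval (c.-1 - s i)%N.
have RSz : RS i.+1 z.
  apply: (colon_val_ge (h := (s i.+1)%:Z)) => [b [] //|].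
  by rewrite val_geE // vz lerBlDr -!PoszD lez_nat; lia.
apply: (length_of_gt0 (RS_Rmodule i) (RS_Rmodule i.+1) (RS_sub (ltnW lt_si)) RSz _ (Hrr hi)).
move=> RS'z.
have [a [Ra na va]] := S_s i.
apply: (conductor_pred_notin HR Hval Hqf Hfg Hres Hc He Hloc Hnreg).
exists (z * a); rewrite mulf_neq0 // (vM Hval) // vz va -PoszD subnK; last by lia.
by split=> //; apply: RS'z; split=> //; right; rewrite va.
Qed.

Lemma sum_rr_chain d : (j0 + d <= c - delta)%N ->
  exists f, strict_chain R (RS j0) (RS (j0 + d)) (\sum_(j0.+1 <= i < (j0 + d).+1) rr i) f.
Proof.
elim: d => [|d IH] le_d.
  by rewrite addn0 big_geq //; exists (fun _ => RS j0); split=> // i _; apply: RS_Rmodule.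
have le_d' : (j0 + d <= c - delta)%N by lia.
have [f Hf] := IH le_d'.
have hi : (j0 < (j0 + d).+1 <= c - delta)%N by lia.
have [[g Hg] _] := Hrr hi.
rewrite addnS big_nat_recr /=; last by lia.
by eexists; apply: (strict_chain_cat Hf Hg).
Qed.

(* RS_n is (R : C), whose elements have value >= 0 by minimality of c. *)
Lemma RS_length_val_ge0 z : RS (c - delta) z -> val_ge v 0 z.
Proof.
move=> RSz; have [->|nz] := eqVneq z 0; first exact: val_ge0.
have [t [nt vt]] := v_onto Hval 1.
have vzt m : R (z * t ^+ (c + m)) /\ v (z * t ^+ (c + m)) = v z + (c + m)%N%:Z.
  have ntm : t ^+ (c + m) != 0 by rewrite expf_neq0.
  have vtm : v (t ^+ (c + m)) = (c + m)%N%:Z by rewrite (vX Hval) // vt mulr1.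
  split; last by rewrite (vM Hval) // vtm.
  apply: RSz; split; first by apply: val_ge_c_R; rewrite val_geE // vtm lez_nat leq_addr.
  by right; rewrite enumerates_length vtm lez_nat leq_addr.
have nzt m : z * t ^+ (c + m) != 0 by rewrite mulf_neq0 // expf_neq0.
have [p [vp Sp]] := subring_val_nat HR Hval (vzt 0%N).1 (nzt 0%N).
rewrite (vzt 0%N).2 addn0 in vp.
suff : (c <= p)%N by rewrite val_geE // -lez_nat -vp; move: (v z); lia.
case: Hc => _; apply; split=> // m; exists (z * t ^+ (c + m)).
split; [exact: (vzt m).1 | exact: nzt |].
by rewrite (vzt m).2 PoszD addrA vp -PoszD.
Qed.

Lemma RS_j0_of_val_ge z : val_ge v e z -> RS j0 z.
Proof.
move=> ez; apply: (colon_val_ge (h := (s j0)%:Z)) => [b [] //|]; apply: val_ge_le ez.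
by case: Hj0 => le_j0 _; rewrite lerBlDr -PoszD lez_nat; lia.
Qed.

Lemma sum_rr_le : (\sum_(j0.+1 <= i < (c - delta).+1) rr i <= e - 1)%N /\
   ((\sum_(j0.+1 <= i < (c - delta).+1) rr i)%N = (e - 1)%N -> s j0 = (c - e)%N).
Proof.
have le_n : (j0 + (c - delta - j0) <= c - delta)%N by rewrite subnKC ?j0_le_length.
have [f] := sum_rr_chain le_n; rewrite subnKC ?j0_le_length // => Hf.
have [gs [<- ugs Hgs]] := strict_chain_gaps HR Hval Hres
  RS_length_val_ge0 (fun z _ => @RS_j0_of_val_ge z) Hf.
have gap_nat y : y \in gs -> exists2 i : nat, y = i%:Z & (0 < i < e)%N.
  move=> /Hgs [/andP [le0y lt_ye] [_ nRSy]]; exists `|y|%N; first by move: le0y; lia.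
  have ny : y != 0.
    apply/eqP => y0; apply: nRSy; rewrite y0; exists 1; rewrite oner_neq0 (v1 Hval).
    by split=> // b [Rb _]; rewrite mul1r.
  by move: le0y lt_ye ny; lia.
split.
  by apply: (size_uniq_int_le (a := 1%N)) => // y /gap_nat [i -> lt_i]; exists i => //; lia.
move=> size_e; apply/eqP; rewrite eqn_leq (proj1 Hj0) andbT leqNgt; apply/negP => lt_cs.
(* Now every element of value e - 1 lies in RS_j0, so e - 1 is not a gap either. *)
have : (size gs <= e - 2)%N.
  apply: (size_uniq_int_le (a := 1%N)) => // y y_gs; have [i ey lt_i] := gap_nat y y_gs.
  exists i => //; suff : i != e.-1 by move: lt_i; lia.
  apply/eqP => ie; have [_ [_ nRSy]] := Hgs y y_gs; apply: nRSy; rewrite ey ie.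
  apply: (values_onto Hval) => z nz vz; apply: (colon_val_ge (h := (s j0)%:Z)) => [b [] //|].
  by rewrite val_geE // vz lerBlDr -PoszD lez_nat; lia.
by rewrite size_e; lia.
Qed.

Lemma length_le_sum_rr : (c - delta - j0 <= \sum_(j0.+1 <= i < (c - delta).+1) rr i)%N.
Proof.
have -> : (c - delta - j0)%N = \sum_(j0.+1 <= i < (c - delta).+1) 1.
  by rewrite sum_nat_const_nat muln1 subSS.
by rewrite !big_nat; apply: leq_sum => i /rr_gt0.
Qed.
End ColonChain.
End Lengths.

Theorem theorem1p4 (K : fieldType) (R : K -> Prop) (v : K -> int)
  (s : nat -> nat) (c e delta r j0 k : nat) (rr : nat -> nat) (x : K) :
  is_subring R -> quotient_field_of R ->
  is_local R -> noetherian R -> dim_one R -> ~ is_regular R ->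
  fg_module R (Rbar R) -> normalized_valuation_of (Rbar R) v ->
  residually_rational R v ->
  enumerates (value_set R v) s ->
  conductor_exp (value_set R v) c ->
  least_pos (value_set R v) e ->
  length_of R R (Rbar R) delta ->
  length_of R R (colon R (max_ideal R)) r ->
  (forall i, (j0 < i <= c - delta)%N ->
     length_of R (colon R (Rsub R v s i.-1)) (colon R (Rsub R v s i)) (rr i)) ->
  ((c - e <= s j0)%N /\ forall j, (c - e <= s j)%N -> (s j0 <= s j)%N) ->
  max_ideal R x -> x != 0%R -> v x = Posz e ->
  length_of R (plus_mul (conductor R) R x) R k ->
  (k = (c - delta - j0)%N /\
   length_of R (conductor R) (colon_in R (conductor R) (max_ideal R)) k /\
   (e - r <= k)%N /\ (0 < e - r)%N) /\
  ((k <= \sum_(j0.+1 <= i < (c - delta).+1) rr i)%N /\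
   (\sum_(j0.+1 <= i < (c - delta).+1) rr i <= e - 1)%N /\
   ((\sum_(j0.+1 <= i < (c - delta).+1) rr i)%N = (e - 1)%N -> s j0 = (c - e)%N)).
Proof.
move=> HR Hqf Hloc _ _ Hnreg Hfg Hval Hres Hs Hc He Hdelta Hr Hrr Hj0 Hxm Hx0 Hvx Hk.
have e_ge2 : (2 <= e)%N by eapply multiplicity_ge2; eassumption.
have r_le_e1 : (r <= e - 1)%N by eapply r_le; eassumption.
have -> : k = (c - delta - j0)%N by eapply k_count; eassumption.
split.
  split=> //; split; first by eapply colength_conductor; eassumption.
  by split; [eapply r_ge; eassumption | lia].
by split; [eapply length_le_sum_rr | eapply sum_rr_le]; eassumption.
Qed.
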